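(* Let $X=(X_n)_{n\in\mathbb{Z}}$ be a stationary and ergodic sequence of integer-valued random variables, and let $\mathbb{Z}^R_X(0)$ be the connected component of $0$ in the record graph of $X$. Then $\mathbb{P}[\mathbb{Z}^R_X(0)\text{ is of class }\mathcal{I}/\mathcal{I}]\in\{0,1\}$ and $\mathbb{P}[\mathbb{Z}^R_X(0)\text{ is of class }\mathcal{I}/\mathcal{F}]\in\{0,1\}$.
   Context: For a sequence $x=(x_n)_{n\in\mathbb{Z}}$ write $y(j,k)=\sum_{l=j}^{k-1}x_l$ for $j<k$. The record map is $R_x(i)=\inf\{n>i: y(i,n)\ge0\}$ if this set is nonempty, and $R_x(i)=i$ otherwise. The record graph has vertex set $\mathbb{Z}$ and an edge $i\to R_x(i)$ whenever $R_x(i)\ne i$; components are in the undirected sense. For a component $C$, $u,v\in C$ lie in the same foil if $R_x^n(u)=R_x^n(v)$ for some $n\ge1$. $C$ is of class $\mathcal{I}/\mathcal{I}$ if it is infinite and all foils are infinite, and of class $\mathcal{I}/\mathcal{F}$ if it is infinite and all foils are finite. *)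

From HB Require Import structures.
From mathcomp Require Import all_boot all_order all_algebra.
From mathcomp Require Import all_classical all_reals all_analysis.
From Stdlib Require Import Relations.
Set Implicit Arguments. Unset Strict Implicit. Unset Printing Implicit Defensive.
Import Order.TTheory GRing.Theory Num.Theory.
Local Open Scope classical_set_scope.
Local Open Scope ring_scope.

(* y(j,k) = sum_{l=j}^{k-1} x_l  (meaningful for j < k). *)
Definition ysum (x : int -> int) (j k : int) : int :=
  \sum_(0 <= t < `|k - j|%N) x (j + t%:Z).

Definition first_record (x : int -> int) (i n : int) : Prop :=
  i < n /\ 0 <= ysum x i n /\ forall m, i < m -> m < n -> ysum x i m < 0.

(* Record map: R_x(i) = inf {n > i : y(i,n) >= 0} if nonempty, else i. *)
Definition recmap (x : int -> int) (i : int) : int :=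
  xget i [set n | first_record x i n].

Definition rec_adj (x : int -> int) (u v : int) : Prop :=
  (recmap x u <> u /\ recmap x u = v) \/ (recmap x v <> v /\ recmap x v = u).

Definition component (x : int -> int) (u : int) : set int :=
  [set v | clos_refl_trans int (rec_adj x) u v].

Definition foil (x : int -> int) (u : int) : set int :=
  [set v | component x u v /\
           exists n : nat, (0 < n)%N /\ iter n (recmap x) u = iter n (recmap x) v].

Definition class_II (x : int -> int) (c : int) : Prop :=
  infinite_set (component x c) /\
  forall u, component x c u -> infinite_set (foil x u).

Definition class_IF (x : int -> int) (c : int) : Prop :=
  infinite_set (component x c) /\
  forall u, component x c u -> finite_set (foil x u).

Definition cylinders : set (set (int -> int)) :=
  [set A | exists (n a : int), A = [set x | x n = a]].

Definition seq_measurable (A : set (int -> int)) : Prop :=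
  <<s cylinders >> A.

Definition shift (x : int -> int) : int -> int := fun n => x (n + 1).

Section Proc.
Context (R : realType) (d : measure_display) (T : measurableType d)
        (P : probability T R).

Definition int_process (X : T -> int -> int) : Prop :=
  forall n a : int, measurable [set w | X w n = a].

Definition stationary (X : T -> int -> int) : Prop :=
  forall A, seq_measurable A ->
    P (X @^-1` (shift @^-1` A)) = P (X @^-1` A).

Definition ergodic (X : T -> int -> int) : Prop :=
  forall A, seq_measurable A -> shift @^-1` A = A ->
    P (X @^-1` A) = 0%E \/ P (X @^-1` A) = 1%E.
End Proc.

From Pilot Require Import Defs.
From HB Require Import structures.
From mathcomp Require Import all_boot all_order all_algebra.
From mathcomp Require Import all_classical all_reals all_analysis.
From mathcomp Require Import zify.
From Stdlib Require Import Relations.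
Set Implicit Arguments. Unset Strict Implicit. Unset Printing Implicit Defensive.
Import Order.TTheory GRing.Theory Num.Theory.
Local Open Scope classical_set_scope.
Local Open Scope ring_scope.

(* If the record map has no fixed point, nesting of the record intervals
   [i, R i] puts 0 and 1 in the same component, so on that event the class of
   the component of 0 is shift invariant and ergodicity gives probability 0 or 1.
   If there are fixed points on both sides of a vertex, no edge crosses them and
   its component is finite; so an infinite component next to a fixed point forces
   a least or a greatest fixed point.  By stationarity P(some fixed point < k)
   does not depend on k, hence the least fixed point is k with probability 0 for
   every k, and likewise for the greatest. *)

Section RecordGraph.
Variable x : int -> int.

Lemma ysum_cat i k n : i <= k -> k <= n -> ysum x i n = ysum x i k + ysum x k n.
Proof.
move=> ik kn; rewrite /ysum.
have -> : `|n - i|%N = (`|k - i| + `|n - k|)%N by lia.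
rewrite (big_cat_nat _ (leq_addr _ _)) //= -{2}(add0n `|k - i|%N) big_addn.
have -> : (`|k - i| + `|n - k| - `|k - i|)%N = `|n - k|%N by lia.
by congr (_ + _); apply: eq_bigr => t _; congr x; lia.
Qed.

Definition record_free i := forall n, i < n -> ysum x i n < 0.

Lemma first_record_uniq i n n' : first_record x i n -> first_record x i n' -> n = n'.
Proof.
move=> [i_n [rec_n before_n]] [i_n' [rec_n' before_n']].
case: (ltgtP n n') => // [nn'|n'n].
- by have := before_n' n i_n nn'; rewrite ltNge rec_n.
- by have := before_n n' i_n' n'n; rewrite ltNge rec_n'.
Qed.

Lemma recmap_first_record i n : first_record x i n -> recmap x i = n.
Proof.
rewrite /recmap => rec_n; case: xgetP => [m -> rec_m|no_rec].
- exact: first_record_uniq rec_m rec_n.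
- by case: (no_rec n).
Qed.

Lemma recmap_record_free i : record_free i -> recmap x i = i.
Proof.
rewrite /recmap => free; case: xgetP => [m _ [i_m [rec_m _]]|//].
by have := free m i_m; rewrite ltNge rec_m.
Qed.

Lemma record_freeVfirst_record i : record_free i \/ first_record x i (recmap x i).
Proof.
have [free|not_free] := pselect (record_free i); [by left|right].
have ex_rec : exists k : nat, 0 <= ysum x i (i + k.+1%:Z).
  apply: contra_notP not_free => no_rec n i_n; rewrite ltNge; apply/negP => rec_n.
  by apply: no_rec; exists `|n - i|.-1; have -> : i + (`|n - i|.-1).+1%:Z = n by lia.
case: (ex_minnP ex_rec) => m rec_m min_m.
suff rec : first_record x i (i + m.+1%:Z) by rewrite (recmap_first_record rec).
split; first lia.
split=> // k i_k k_m; rewrite ltNge; apply/negP => rec_k.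
have := min_m `|k - i|.-1; have -> : i + (`|k - i|.-1).+1%:Z = k by lia.
by move=> /(_ rec_k); lia.
Qed.

Lemma recmap_ge i : i <= recmap x i.
Proof. by case: (record_freeVfirst_record i) => [/recmap_record_free ->|[/ltW]]. Qed.

Lemma first_record_recmap i : recmap x i <> i -> first_record x i (recmap x i).
Proof. by case: (record_freeVfirst_record i) => // /recmap_record_free. Qed.

Lemma recmap_nested i k : recmap x i <> i -> i < k -> k < recmap x i ->
  k < recmap x k /\ recmap x k <= recmap x i.
Proof.
move=> /first_record_recmap [_ [rec_i before_i]] i_k k_r.
have pos_k : 0 < ysum x k (recmap x i).
  by have := ysum_cat (ltW i_k) (ltW k_r); have := before_i k i_k k_r; lia.
case: (record_freeVfirst_record k) => [free_k|[k_rk [_ before_k]]].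
  by have := free_k _ k_r; lia.
split=> //; rewrite leNgt; apply/negP => r_rk.
by have := before_k _ k_r r_rk; lia.
Qed.

Definition common_descendant u v :=
  exists m n : nat, iter m (recmap x) u = iter n (recmap x) v.

Lemma common_descendant_trans u v w :
  common_descendant u v -> common_descendant v w -> common_descendant u w.
Proof.
move=> [a [b uv]] [c [e vw]]; exists (c + a)%N, (b + e)%N.
by rewrite !iterD uv -!iterD addnC iterD vw -iterD.
Qed.

Lemma component_sym u v : component x u v -> component x v u.
Proof.
elim=> {u v} [u v adj|u|u v w _ vu _ wv]; last exact: rt_trans wv vu.
- by apply: rt_step; move: adj; rewrite /rec_adj; tauto.
- exact: rt_refl.
Qed.

Lemma component_iter u m : component x u (iter m (recmap x) u).
Proof.
elim: m => [|m IH] /=; first exact: rt_refl.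
apply: (rt_trans _ _ _ _ _ IH).
have [fixed|moves] := pselect (recmap x (iter m (recmap x) u) = iter m (recmap x) u).
- by rewrite fixed; exact: rt_refl.
- by apply: rt_step; left.
Qed.

Lemma componentP u v : component x u v <-> common_descendant u v.
Proof.
split.
- elim=> {u v} [u v [[_ <-]|[_ <-]]|u|u v w _ uv _ vw].
  + by exists 1%N, 0%N.
  + by exists 0%N, 1%N.
  + by exists 0%N, 0%N.
  + exact: common_descendant_trans uv vw.
- move=> [m [n mn]]; apply: (rt_trans _ _ _ _ _ (component_iter u m)).
  by rewrite mn; exact/component_sym/component_iter.
Qed.

Lemma component_eq c c' : component x c c' -> component x c = component x c'.
Proof.
move=> cc'; apply/seteqP; split=> v.
- exact: rt_trans (component_sym cc').
- exact: rt_trans cc'.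
Qed.

Lemma component_succ i : ~ record_free i -> component x i (i + 1).
Proof.
case: (record_freeVfirst_record i) => // -[i_r _] _.
have moves : recmap x i <> i by move=> fixed; move: i_r; rewrite fixed ltxx.
have to_r (k : nat) j : `|recmap x i - j|%N = k -> i < j <= recmap x i ->
    component x j (recmap x i).
  elim/ltn_ind: k j => k IH j k_eq /andP [i_j j_r].
  have [->|j_ne] := eqVneq j (recmap x i); first exact: rt_refl.
  have j_lt : j < recmap x i by rewrite lt_neqAle j_ne j_r.
  have [j_rj rj_r] := recmap_nested moves i_j j_lt.
  apply: (rt_trans _ _ _ (recmap x j)); first by apply: rt_step; left; split=> //; lia.
  by apply: (IH _ _ _ erefl); lia.
apply: (rt_trans _ _ _ (recmap x i)); first by apply: rt_step; left.
by apply/component_sym/(to_r _ _ erefl); lia.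
Qed.

Lemma record_free_separates r u v : record_free r -> component x u v ->
  (u <= r <-> v <= r).
Proof.
move=> free_r.
have stays_left a : recmap x a <> a -> a <= r -> recmap x a <= r.
  move=> moves a_r; rewrite leNgt; apply/negP => r_ra.
  have a_lt : a < r.
    rewrite lt_neqAle a_r andbT; apply/eqP => a_eq.
    by apply: moves; rewrite a_eq recmap_record_free.
  by have [+ _] := recmap_nested moves a_lt r_ra; rewrite recmap_record_free // ltxx.
elim=> {u v} [u v [[moves <-]|[moves <-]]|u|u v w _ uv _ vw].
- by split; [exact: stays_left|have := recmap_ge u; lia].
- by split; [have := recmap_ge v; lia|exact: stays_left].
- exact: iff_refl.
- by rewrite uv.
Qed.

Lemma component_finite r1 r2 c : record_free r1 -> record_free r2 ->
  r1 < c <= r2 -> finite_set (component x c).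
Proof.
move=> free1 free2 /andP [r1_c c_r2].
apply: (sub_finite_set _ (finite_image (fun n : nat => r1 + n.+1%:Z) (finite_II `|r2 - r1|))).
move=> v cv; have [_ v_r1] := record_free_separates free1 cv.
have [c_r2' _] := record_free_separates free2 cv.
have r1_v : r1 < v by rewrite ltNge; apply/negP => /v_r1; lia.
have v_r2 : v <= r2 by exact: c_r2'.
by exists `|v - r1|.-1; rewrite /= /mkset; lia.
Qed.

End RecordGraph.

Lemma ysum_shift x i n : ysum (Defs.shift x) i n = ysum x (i + 1) (n + 1).
Proof.
rewrite /ysum /Defs.shift; have -> : absz (n + 1 - (i + 1))%R = absz (n - i)%R by congr absz; lia.
by apply: eq_bigr => t _; congr x; lia.
Qed.

Lemma record_free_shift x i : record_free (Defs.shift x) i <-> record_free x (i + 1).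
Proof.
split=> free n i_n.
- by have := free (n - 1); rewrite ysum_shift subrK; apply; lia.
- by rewrite ysum_shift; apply: free; lia.
Qed.

Lemma recmap_shift x i : recmap (Defs.shift x) i = recmap x (i + 1) - 1.
Proof.
case: (record_freeVfirst_record x (i + 1)) => [free|[i_r [rec_r before_r]]].
  by rewrite (recmap_record_free free) addrK recmap_record_free // record_free_shift.
apply: recmap_first_record; split; first lia.
split; first by rewrite ysum_shift subrK.
by move=> m i_m m_r; rewrite ysum_shift; apply: before_r; lia.
Qed.

Lemma iter_recmap_shift x m u :
  iter m (recmap (Defs.shift x)) u = iter m (recmap x) (u + 1) - 1.
Proof.
elim: m => [|m IH] /=; first by rewrite addrK.
by rewrite IH recmap_shift subrK.
Qed.

Lemma iter_recmap_shift_eq x m n u v :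
  iter m (recmap (Defs.shift x)) u = iter n (recmap (Defs.shift x)) v <->
  iter m (recmap x) (u + 1) = iter n (recmap x) (v + 1).
Proof. by rewrite !iter_recmap_shift; split=> [/addIr|->]. Qed.

Lemma component_shift x u v :
  component (Defs.shift x) u v <-> component x (u + 1) (v + 1).
Proof.
rewrite !componentP; split=> -[m [n mn]]; exists m, n; exact/iter_recmap_shift_eq.
Qed.

Lemma foil_shift x u v : foil (Defs.shift x) u v <-> foil x (u + 1) (v + 1).
Proof.
rewrite /foil /= component_shift.
by split=> -[uv [n [n_gt0 meet]]]; split=> //; exists n; split=> //; apply/iter_recmap_shift_eq.
Qed.

Lemma finite_set_translate (S : set int) a : finite_set [set v | S (v + a)] <-> finite_set S.
Proof.
split=> fin.
- apply: sub_finite_set (finite_image (fun v => v + a) fin) => v Sv.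
  by exists (v - a); rewrite /= ?subrK.
- apply: sub_finite_set (finite_image (fun v => v - a) fin) => v Sv.
  by exists (v + a); rewrite /= ?addrK.
Qed.

Section FoilClass.
Variable p : set int -> Prop.

Definition foil_class x c :=
  infinite_set (component x c) /\ forall u, component x c u -> p (foil x u).

Lemma foil_class_component x c c' :
  component x c c' -> foil_class x c -> foil_class x c'.
Proof. by move=> /component_eq cc'; rewrite /foil_class cc'. Qed.

Hypothesis p_translate : forall (S : set int) a, p [set v | S (v + a)] <-> p S.

Lemma foil_class_shift x : foil_class (Defs.shift x) 0 <-> foil_class x 1.
Proof.
have compE : component (Defs.shift x) 0 = [set v | component x 1 (v + 1)].
  by apply/seteqP; split=> v; rewrite /= component_shift add0r.
have foilE u : foil (Defs.shift x) u = [set v | foil x (u + 1) (v + 1)].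
  by apply/seteqP; split=> v; rewrite /= foil_shift.
rewrite /foil_class compE finite_set_translate.
split=> -[inf foils]; split=> // u cu.
- by have := foils (u - 1); rewrite /= subrK foilE subrK p_translate; apply.
- by rewrite foilE p_translate; apply: foils.
Qed.

End FoilClass.

Definition intseq : Type := int -> int.
HB.instance Definition _ := Choice.on intseq.
HB.instance Definition _ := isPointed.Build intseq (fun _ => 0).
Local Notation seqs := (g_sigma_algebraType (cylinders : set (set intseq))).

(* Convertible to [seq_measurable [set x | q x]], stated in the measurable type
   generated by the cylinders so that the sigma-algebra lemmas apply. *)
Definition mpred (q : (int -> int) -> Prop) := measurable [set x : seqs | q x].

Lemma mpred_ext (q q' : (int -> int) -> Prop) :
  (forall x, q x <-> q' x) -> mpred q -> mpred q'.
Proof.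
move=> qq'; rewrite /mpred.
by have -> : [set x : seqs | q' x] = [set x | q x] by apply/seteqP; split=> x /=; rewrite qq'.
Qed.

Lemma mpred_const (Q : Prop) : mpred (fun _ => Q).
Proof.
rewrite /mpred; have [HQ|nQ] := pselect Q.
- by have -> : [set _ : seqs | Q] = setT by apply/seteqP; split.
- by have -> : [set _ : seqs | Q] = set0 by apply/seteqP; split.
Qed.

Lemma mpredI q q' : mpred q -> mpred q' -> mpred (fun x => q x /\ q' x).
Proof. exact: measurableI. Qed.

Lemma mpredU q q' : mpred q -> mpred q' -> mpred (fun x => q x \/ q' x).
Proof. exact: measurableU. Qed.

Lemma mpredC q : mpred q -> mpred (fun x => ~ q x).
Proof. exact: measurableC. Qed.

Lemma mpred_imply q q' : mpred q -> mpred q' -> mpred (fun x => q x -> q' x).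
Proof.
move=> mq mq'; apply: mpred_ext (mpredU (mpredC mq) mq') => x.
by split=> [[]|imp] //; have [/imp|] := pselect (q x); [right|left].
Qed.

Lemma mpred_exists (I : countType) (q : I -> (int -> int) -> Prop) :
  (forall i, mpred (q i)) -> mpred (fun x => exists i, q i x).
Proof.
move=> mq; rewrite /mpred.
have -> : [set x : seqs | exists i, q i x] = \bigcup_i [set x : seqs | q i x].
  by apply/seteqP; split=> x [i qix]; exists i.
exact: countable_bigcupT_measurable.
Qed.

Lemma mpred_forall (I : countType) (q : I -> (int -> int) -> Prop) :
  (forall i, mpred (q i)) -> mpred (fun x => forall i, q i x).
Proof.
move=> mq; apply: mpred_ext (mpredC (mpred_exists (fun i => mpredC (mq i)))) => x.
by split=> [/forallNP qx i|qx [i]]; [exact: contrapT|apply].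
Qed.

Definition mfun_int (f : (int -> int) -> int) := forall c, mpred (fun x => f x = c).

Lemma mpred_mfun_int f (q : int -> Prop) : mfun_int f -> mpred (fun x => q (f x)).
Proof.
move=> mf; apply: (mpred_ext (q := fun x => exists c, f x = c /\ q c)).
  by move=> x; split=> [[c [<-]]|qfx] //; exists (f x).
by apply: mpred_exists => c; apply: mpredI (mf c) (mpred_const _).
Qed.

Lemma mpred_mfun_int2 f g (q : int -> int -> Prop) :
  mfun_int f -> mfun_int g -> mpred (fun x => q (f x) (g x)).
Proof.
move=> mf mg; apply: (mpred_ext (q := fun x => exists c, f x = c /\ q c (g x))).
  by move=> x; split=> [[c [<-]]|qfx] //; exists (f x).
by apply: mpred_exists => c; apply: mpredI (mf c) (mpred_mfun_int _ mg).
Qed.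

Lemma mfun_int_const c0 : mfun_int (fun _ => c0).
Proof. by move=> c; apply: mpred_const. Qed.

Lemma mfun_intD f g : mfun_int f -> mfun_int g -> mfun_int (fun x => f x + g x).
Proof. by move=> mf mg c; apply: (mpred_mfun_int2 (fun a b => a + b = c)). Qed.

Lemma mfun_int_ysum i n : mfun_int (fun x => ysum x i n).
Proof.
rewrite /ysum; elim: `|n - i|%N => [|k IH].
  by under [fun x => _]funext => x do rewrite big_geq //; exact: mfun_int_const.
under [fun x => _]funext => x do rewrite big_nat_recr //=.
by apply: mfun_intD IH _ => c; apply: sub_sigma_algebra; exists (i + k%:Z), c.
Qed.

Lemma mpred_record_free i : mpred (fun x => record_free x i).
Proof.
apply: (@mpred_forall int) => n.
exact: mpred_imply (mpred_const _) (mpred_mfun_int (fun c => c < 0) (mfun_int_ysum i n)).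
Qed.

Lemma mpred_first_record i n : mpred (fun x => first_record x i n).
Proof.
apply: mpredI (mpred_const _) (mpredI (mpred_mfun_int (fun c => 0 <= c) (mfun_int_ysum i n)) _).
apply: (@mpred_forall int) => m; apply: mpred_imply (mpred_const _) (mpred_imply (mpred_const _) _).
exact: mpred_mfun_int (fun c => c < 0) (mfun_int_ysum i m).
Qed.

Lemma mfun_int_recmap i : mfun_int (fun x => recmap x i).
Proof.
move=> c; apply: (mpred_ext (q := fun x => (c = i /\ record_free x i) \/ first_record x i c)).
  move=> x; split=> [[[-> /recmap_record_free]|/recmap_first_record] //|<-].
  by case: (record_freeVfirst_record x i) => rec; [left; rewrite recmap_record_free|right].
exact: mpredU (mpredI (mpred_const _) (mpred_record_free i)) (mpred_first_record i c).
Qed.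

Lemma mfun_int_iter m u : mfun_int (fun x => iter m (recmap x) u).
Proof.
elim: m => [|m IH] c /=; first exact: mpred_const.
apply: (mpred_ext (q := fun x => exists w, iter m (recmap x) u = w /\ recmap x w = c)).
  by move=> x; split=> [[w [-> ->]]|<-] //; exists (iter m (recmap x) u).
by apply: mpred_exists => w; apply: mpredI (IH w) (mfun_int_recmap w c).
Qed.

Lemma mpred_component u v : mpred (fun x => component x u v).
Proof.
apply: mpred_ext (fun x => iff_sym (componentP x u v)) _.
apply: mpred_exists => m; apply: mpred_exists => n.
exact: mpred_mfun_int2 (mfun_int_iter m u) (mfun_int_iter n v).
Qed.

Lemma mpred_foil u v : mpred (fun x => foil x u v).
Proof.
apply: mpredI (mpred_component u v) (mpred_exists _) => n.
exact: mpredI (mpred_const _) (mpred_mfun_int2 _ (mfun_int_iter n u) (mfun_int_iter n v)).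
Qed.

Lemma mpred_finite (q : (int -> int) -> set int) :
  (forall v, mpred (fun x => q x v)) -> mpred (fun x => finite_set (q x)).
Proof.
move=> mq; apply: (mpred_ext (q := fun x => exists s : seq int, forall v, q x v <-> v \in s)).
  move=> x; rewrite finite_seqP; split=> -[s qs]; exists s.
  - by apply/seteqP; split=> v /qs.
  - by rewrite qs.
apply: mpred_exists => s; apply: mpred_forall => v.
exact: mpredI (mpred_imply (mq v) (mpred_const _)) (mpred_imply (mpred_const _) (mq v)).
Qed.

Lemma mpred_foil_class p c :
  (forall q, (forall v, mpred (fun x => q x v)) -> mpred (fun x => p (q x))) ->
  mpred (fun x => foil_class p x c).
Proof.
move=> mp; apply: mpredI.
  by apply: mpredC; apply: mpred_finite => v; exact: mpred_component.
apply: (@mpred_forall int) => u.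
exact: mpred_imply (mpred_component c u) (mp _ (mpred_foil u)).
Qed.

Lemma int_stepdown (Q : int -> Prop) k j :
  (forall i, Q (i + 1) -> Q i) -> j <= k -> Q k -> Q j.
Proof.
move=> down j_k; have -> : k = j + `|k - j|%N by lia.
elim: `|k - j|%N => [|n IH]; first by rewrite addr0.
by move=> Qn; apply/IH/down; have -> : j + n%:Z + 1 = j + n.+1%:Z by lia.
Qed.

Lemma int_stepup (Q : int -> Prop) k j :
  (forall i, Q i -> Q (i + 1)) -> k <= j -> Q k -> Q j.
Proof.
move=> up k_j Qk; rewrite -[j]opprK; apply: (int_stepdown (Q := fun i => Q (- i)) (k := - k)).
- by move=> i; rewrite opprD => /up; rewrite subrK.
- by rewrite lerN2.
- by rewrite opprK.
Qed.

Definition no_record_free : set (int -> int) := [set x | forall i, ~ record_free x i].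
Definition record_free_below k : set (int -> int) := [set x | exists i, i < k /\ record_free x i].
Definition record_free_from k : set (int -> int) := [set x | exists i, k <= i /\ record_free x i].

(* The record-free points have a least or a greatest element. *)
Definition extremal_record_free : set (int -> int) :=
  \bigcup_k ((record_free_below (k + 1) `\` record_free_below k) `|`
             (record_free_from k `\` record_free_from (k + 1))).

Lemma extremal_record_free_of_infinite x c r :
  infinite_set (component x c) -> record_free x r -> extremal_record_free x.
Proof.
move=> inf free_r; apply: contrapT => no_extremal.
have down k : record_free_below (k + 1) x -> record_free_below k x.
  by move=> below; apply: contrapT => not_below; apply: no_extremal; exists k => //; left.
have up k : record_free_from k x -> record_free_from (k + 1) x.
  by move=> from; apply: contrapT => not_from; apply: no_extremal; exists k => //; right.
have [r1 [r1_c free1]] : record_free_below c x.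
  have [r_c|c_r] := ltP r c; first by exists r.
  by apply: (int_stepdown down (k := r + 1)); [lia|exists r; split=> //; lia].
have [r2 [c_r2 free2]] : record_free_from c x.
  have [c_r|r_c] := leP c r; first by exists r.
  by apply: (int_stepup up (k := r)); [lia|exists r].
by apply: inf; apply: (component_finite free1 free2); lia.
Qed.

Lemma shift_no_record_free : Defs.shift @^-1` no_record_free = no_record_free.
Proof.
apply/seteqP; split=> x nofree i.
- by rewrite -(subrK 1 i) -record_free_shift; apply: nofree.
- by rewrite record_free_shift; apply: nofree.
Qed.

Lemma shift_record_free_below k :
  Defs.shift @^-1` record_free_below k = record_free_below (k + 1).
Proof.
apply/seteqP; split=> x [i [i_k free]].
- by exists (i + 1); split; [lia|rewrite -record_free_shift].
- by exists (i - 1); split; [lia|rewrite record_free_shift subrK].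
Qed.

Lemma shift_record_free_from k :
  Defs.shift @^-1` record_free_from k = record_free_from (k + 1).
Proof.
apply/seteqP; split=> x [i [k_i free]].
- by exists (i + 1); split; [lia|rewrite -record_free_shift].
- by exists (i - 1); split; [lia|rewrite record_free_shift subrK].
Qed.

Lemma mpred_no_record_free : mpred no_record_free.
Proof. by apply: (@mpred_forall int) => i; apply: mpredC; exact: mpred_record_free. Qed.

Lemma mpred_record_free_below k : mpred (record_free_below k).
Proof. by apply: (@mpred_exists int) => i; exact: mpredI (mpred_const _) (mpred_record_free i). Qed.

Lemma mpred_record_free_from k : mpred (record_free_from k).
Proof. by apply: (@mpred_exists int) => i; exact: mpredI (mpred_const _) (mpred_record_free i). Qed.

Lemma measureD_eq0 d (T : measurableType d) (R : realType)
    (mu : {finite_measure set T -> \bar R}) (A B : set T) :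
  measurable A -> measurable B -> B `<=` A -> mu A = mu B -> mu (A `\` B) = 0%E.
Proof.
move=> mA mB BA muAB; have muA := fin_num_measure mu A mA.
rewrite measureD ?setIidr ?ltey_eq ?muA //.
have muB := fin_num_measure mu B mB.
(* [measureD] exposes [mu] through another structure projection, so [muAB]
   is used up to conversion rather than by rewriting. *)
by apply: (@eq_trans _ _ (mu B - mu B)%E); [congr (_ - _)%E; exact: muAB|exact: subee].
Qed.

Lemma negligible_bigcup_int d (T : sigmaRingType d) (R : realFieldType)
    (mu : {measure set T -> \bar R}) (F : int -> set T) :
  (forall k, mu.-negligible (F k)) -> mu.-negligible (\bigcup_k F k).
Proof.
move=> negF; apply: (negligibleS _ (negligible_bigcup (F := fun n => F n%:Z `|` F (- n%:Z)) _)).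
  move=> t [k _ Fkt]; exists `|k|%N => //=.
  have [k_ge0|k_lt0] := leP 0 k; [left|right].
  - by have -> : (`|k|%N : int) = k by lia.
  - by have -> : - (`|k|%N : int) = k by lia.
by move=> n; apply: negligibleU.
Qed.

Section StationaryProcess.
Variables (R : realType) (d : measure_display) (T : measurableType d)
  (P : probability T R) (X : T -> int -> int).
Hypothesis hX : int_process X.

Lemma measurable_event (A : set (int -> int)) : mpred A -> measurable (X @^-1` A).
Proof.
move=> mA; have mX : measurable_fun setT (X : T -> seqs).
  apply: (@measurability _ _ T seqs setT X cylinders erefl) => _ [_ [n [a ->]] <-].
  by rewrite setTI; exact: hX.
by have := mX measurableT A mA; rewrite setTI.
Qed.

Hypothesis hstat : stationary P X.

Lemma extremal_record_free_negligible : P.-negligible (X @^-1` extremal_record_free).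
Proof.
have null A B : mpred A -> mpred B -> B `<=` A -> P (X @^-1` A) = P (X @^-1` B) ->
    P.-negligible (X @^-1` (A `\` B)).
  move=> mA mB BA AB; apply/negligibleP; first exact: measurable_event (mpredI mA (mpredC mB)).
  apply: measureD_eq0 (measurable_event mA) (measurable_event mB) _ AB => w; exact: BA.
rewrite preimage_bigcup; apply: negligible_bigcup_int => k.
rewrite preimage_setU; apply: negligibleU; apply: null.
- exact: mpred_record_free_below.
- exact: mpred_record_free_below.
- by move=> x [i [i_k free]]; exists i; split=> //; lia.
- by rewrite -shift_record_free_below hstat //; exact: mpred_record_free_below.
- exact: mpred_record_free_from.
- exact: mpred_record_free_from.
- by move=> x [i [k_i free]]; exists i; split=> //; lia.
- by rewrite -shift_record_free_from hstat //; exact: mpred_record_free_from.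
Qed.

Hypothesis herg : ergodic P X.
Variable p : set int -> Prop.
Hypothesis p_translate : forall (S : set int) a, p [set v | S (v + a)] <-> p S.
Hypothesis mpred_p : forall q : (int -> int) -> set int,
  (forall v, mpred (fun x => q x v)) -> mpred (fun x => p (q x)).

Lemma foil_class_zero_one :
  P [set w | foil_class p (X w) 0] = 0%E \/ P [set w | foil_class p (X w) 0] = 1%E.
Proof.
pose S := [set x | foil_class p x 0].
have mS : mpred S := mpred_foil_class 0 mpred_p.
have invariant : Defs.shift @^-1` (S `&` no_record_free) = S `&` no_record_free.
  rewrite preimage_setI shift_no_record_free; apply/seteqP; split=> x [Sx nofree]; split=> //.
  - have c01 : component x 0 1 by rewrite -[1]add0r; apply/component_succ/nofree.
    by apply: (foil_class_component (component_sym c01)); rewrite -foil_class_shift.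
  - have c01 : component x 0 1 by rewrite -[1]add0r; apply/component_succ/nofree.
    by apply/foil_class_shift/(foil_class_component c01).
have null : P (X @^-1` (S `\` no_record_free)) = 0%E.
  apply: measure_negligible; first exact: measurable_event (mpredI mS (mpredC mpred_no_record_free)).
  apply: negligibleS extremal_record_free_negligible => w [[inf _] /existsNP [r /contrapT free]].
  exact: extremal_record_free_of_infinite inf free.
have mSG := mpredI mS mpred_no_record_free.
have -> : P (X @^-1` S) = P (X @^-1` (S `&` no_record_free)).
  rewrite -[in LHS](setUIDK S no_record_free) preimage_setU.
  exact: measureU0 (measurable_event mSG) (measurable_event (mpredI mS (mpredC mpred_no_record_free))) null.
exact: herg mSG invariant.
Qed.

End StationaryProcess.

Unset Implicit Arguments.
Set Strict Implicit.

Theorem proposition3p1 (R : realType) (d : measure_display) (T : measurableType d)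
  (P : probability T R) (X : T -> int -> int)
  (hX : int_process X) (hstat : stationary P X) (herg : ergodic P X) :
  (P [set w | class_II (X w) 0] = 0%E \/ P [set w | class_II (X w) 0] = 1%E) /\
  (P [set w | class_IF (X w) 0] = 0%E \/ P [set w | class_IF (X w) 0] = 1%E).
Proof.
split.
- apply: (foil_class_zero_one hX hstat herg (p := fun S => infinite_set S)).
  + by move=> S a; rewrite finite_set_translate.
  + by move=> q mq; apply: mpredC; exact: mpred_finite.
- apply: (foil_class_zero_one hX hstat herg (p := finite_set)).
  + exact: finite_set_translate.
  + exact: mpred_finite.
Qed.
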